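(* Let $p\ge k\ge 1$ be integers and let $\mathbf y\in\mathbb{R}^p$. Let $\mathcal{I}^k\subseteq\{1,\dots,p\}$ be a top-$k$ index set of $\mathbf y$ (a set of $k$ indices of entries of largest magnitude), and let $\operatorname{top}_k(\mathbf y)$ be the vector that agrees with $\mathbf y$ on $\mathcal{I}^k$ and is $0$ elsewhere. Let $\gamma_0\ge 0$ be such that $\|\mathbf y-\operatorname{top}_k(\mathbf y)\|^2\le\gamma_0\|\mathbf y\|^2$. Let $0\le d\le k$ be an integer, and let $\tilde{\mathcal I}^k$ be a $k$-element index set with $\mathbf H(\mathcal I^k,\tilde{\mathcal I}^k)=2d$, chosen at random so that its $k-d$ common indices with $\mathcal{I}^k$ form a uniformly random $(k-d)$-subset of $\mathcal I^k$. Define $\mathrm{comp}(\mathbf y)\in\mathbb{R}^p$ by $\mathrm{comp}(\mathbf y)_m=\mathbf y_m$ if $m\in\tilde{\mathcal I}^k$ and $0$ otherwise. Then $$\mathbb{E}\|\mathbf y-\mathrm{comp}(\mathbf y)\|^2\le\gamma\|\mathbf y\|^2,\qquad \gamma:=\frac{d}{k}+\Big(1-\frac{d}{k}\Big)\gamma_0 .$$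
   Context: For a set $\mathcal I$ of $k$ indices in $\{1,\dots,p\}$, let $\mathbf x_{\mathcal I}\in\{0,1\}^p$ be its indicator vector. For two such sets, $\mathbf H(\mathcal I_1,\mathcal I_2)$ denotes the Hamming distance between $\mathbf x_{\mathcal I_1}$ and $\mathbf x_{\mathcal I_2}$; for two $k$-element sets it equals $2d$ where $d=k-|\mathcal I_1\cap\mathcal I_2|$. $\|\cdot\|$ is the Euclidean norm. *)

From mathcomp Require Import all_boot all_order all_algebra.
Set Implicit Arguments. Unset Strict Implicit. Unset Printing Implicit Defensive.
Import Order.TTheory GRing.Theory Num.Theory.
Local Open Scope ring_scope.

Definition sqnorm (R : realFieldType) (p : nat) (y : 'I_p -> R) : R :=
  \sum_(i < p) y i ^+ 2.

(* the vector agreeing with y on S and 0 elsewhere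
   (top_k(y) = restrict I y, comp(y) = restrict I~ y) *)
Definition restrict (R : realFieldType) (p : nat) (S : {set 'I_p}) (y : 'I_p -> R)
  : 'I_p -> R := fun m => if m \in S then y m else 0.

Definition is_topk (R : realFieldType) (p : nat) (y : 'I_p -> R) (k : nat)
  (I : {set 'I_p}) : Prop :=
  #|I| = k /\ (forall i j, i \in I -> j \notin I -> `|y j| <= `|y i|).

Definition hamming (p : nat) (I J : {set 'I_p}) : nat :=
  #|(I :\: J) :|: (J :\: I)|.

From mathcomp Require Import all_boot all_order all_algebra.
From mathcomp Require Import zify ring lra.

(** If [w S != 0] then [S] has [k] elements and meets [I] in [k - d] of them,
    so [‖y - comp y‖² <= ‖y‖² - Σ_(i ∈ S ∩ I) y_i²].  As [S ∩ I] is a uniform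
    [(k - d)]-subset of [I], each [i ∈ I] lies in it with probability
    [(k - d)/k], so the expected mass kept is [(1 - d/k) ‖top_k y‖²].  Finally
    [‖y‖² - (1 - d/k) ‖top_k y‖² = (d/k) ‖y‖² + (1 - d/k) ‖y - top_k y‖²]. *)

Set Implicit Arguments.
Unset Strict Implicit.
Unset Printing Implicit Defensive.
Import Order.TTheory GRing.Theory Num.Theory.
Local Open Scope ring_scope.

Lemma hammingE (p : nat) (I J : {set 'I_p}) :
  hamming I J = (#|I| + #|J| - 2 * #|I :&: J|)%N.
Proof.
rewrite /hamming cardsU.
have -> : (I :\: J) :&: (J :\: I) = set0.
  by apply/setP => x; rewrite !inE; case: (x \in I); case: (x \in J).
rewrite cards0 subn0 !cardsD [J :&: I]setIC.
have := subset_leq_card (subsetIl I J).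
have := subset_leq_card (subsetIr I J); lia.
Qed.

Lemma sqnorm_sub_restrict (R : realFieldType) (p : nat) (S : {set 'I_p})
    (y : 'I_p -> R) :
  sqnorm (fun m => y m - restrict S y m) = sqnorm y - \sum_(i in S) y i ^+ 2.
Proof.
rewrite /sqnorm [in RHS](bigID (mem S)) /= addrC addrK (bigID (mem S)) /=.
rewrite big1 ?add0r => [|i iS]; last by rewrite /restrict iS subrr expr0n.
by apply: eq_bigr => i /negbTE iS; rewrite /restrict iS subr0.
Qed.

Lemma card_draws_containing (T : finType) (A : {set T}) (i : T) (j : nat) :
  i \in A ->
  #|[set X : {set T} | [&& X \subset A, #|X| == j.+1 & i \in X]]|
    = 'C(#|A|.-1, j).
Proof.
move=> iA.
have notin_draw (B : {set T}) : B \subset A :\ i -> i \notin B.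
  by move=> BAi; apply/negP => /(subsetP BAi); rewrite !inE eqxx.
have -> : [set X : {set T} | [&& X \subset A, #|X| == j.+1 & i \in X]]
    = (fun B => i |: B) @: [set B : {set T} | B \subset A :\ i & #|B| == j].
  apply/setP => X; rewrite !inE; apply/idP/imsetP.
    case/and3P => XA /eqP cardX iX; exists (X :\ i); last by rewrite setD1K.
    have := cardsD1 i X; rewrite iX cardX add1n => -[->].
    by rewrite inE setSD //= eqxx.
  case=> B; rewrite inE => /andP [BAi /eqP cardB] ->.
  rewrite cardsU1 notin_draw // cardB setU11 eqxx andbT /=.
  by rewrite subUset sub1set iA (subset_trans BAi) ?subsetDl.
rewrite card_in_imset ?cards_draws ?(cardsD1 i A) ?iA //.
move=> B1 B2; rewrite !inE => /andP [B1Ai _] /andP [B2Ai _] eqB.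
by rewrite -(setU1K (notin_draw _ B1Ai)) -(setU1K (notin_draw _ B2Ai)) eqB.
Qed.

Lemma sum_draws_sum (T : finType) (V : nmodType) (A : {set T}) (j : nat)
    (F : T -> V) :
  (\sum_(X : {set T} | (X \subset A) && (#|X| == j)) \sum_(i in X) F i) *+ #|A|
    = (\sum_(i in A) F i) *+ (j * 'C(#|A|, j)).
Proof.
case: j => [|j].
  rewrite mul0n mulr0n (big_pred1 set0) ?big_set0 ?mul0rn // => X.
  by rewrite cards_eq0 andb_idl // => /eqP ->; rewrite sub0set.
rewrite (exchange_big_dep (mem A)) /=; last first.
  by move=> X i /andP [/subsetP XA _] /XA.
rewrite -!sumrMnl; apply: eq_bigr => i iA.
set draws_i := [set X : {set T} | [&& X \subset A, #|X| == j.+1 & i \in X]].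
rewrite (eq_bigl (mem draws_i)).
  by rewrite sumr_const card_draws_containing // -mulrnA mulnC mul_bin_diag.
by move=> X; rewrite /draws_i !inE andbA.
Qed.

Lemma expect_sum_setI_uniform (T : finType) (R : numFieldType) (I : {set T})
    (m : nat) (w : {set T} -> R) (F : T -> R) :
  (0 < #|I|)%N -> (m <= #|I|)%N ->
  (forall S, w S != 0 -> #|S :&: I| = m) ->
  (forall U : {set T}, U \subset I -> #|U| = m ->
     \sum_(S : {set T} | S :&: I == U) w S = 'C(#|I|, m)%:R^-1) ->
  \sum_(S : {set T}) w S * \sum_(i in S :&: I) F i
    = m%:R / #|I|%:R * \sum_(i in I) F i.
Proof.
move=> I_gt0 leq_mI w_card w_unif.
have draws_sum : \sum_(S : {set T}) w S * \sum_(i in S :&: I) F i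
    = (\sum_(U : {set T} | (U \subset I) && (#|U| == m)) \sum_(i in U) F i)
      * 'C(#|I|, m)%:R^-1.
  rewrite mulr_suml (partition_big (fun S => S :&: I) xpredT) //=.
  rewrite (bigID [pred U : {set T} | (U \subset I) && (#|U| == m)]) /=.
  rewrite [X in _ + X]big1 ?addr0; last first.
    move=> U notD; apply: big1 => S /eqP eqU.
    have [->|/w_card cardSI] := eqVneq (w S) 0; first by rewrite mul0r.
    by move: notD; rewrite -eqU subsetIr cardSI eqxx.
  apply: eq_bigr => U /andP [UI /eqP cardU].
  rewrite -(w_unif U UI cardU) mulr_sumr.
  by apply: eq_bigr => S /eqP <-; rewrite mulrC.
have := sum_draws_sum I m F.
rewrite -[LHS]mulr_natr -[RHS]mulr_natr natrM => double_count.
have nzI : (#|I|%:R : R) != 0 by rewrite pnatr_eq0 -lt0n.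
have nzC : ('C(#|I|, m)%:R : R) != 0 by rewrite pnatr_eq0 -lt0n bin_gt0.
rewrite draws_sum; apply: (mulIf nzI); rewrite mulrAC double_count.
by field; rewrite ?nzI ?nzC.
Qed.

Theorem lemma1 (R : realFieldType) (p k : nat) (y : 'I_p -> R)
  (I : {set 'I_p}) (gamma0 : R) (d : nat) (w : {set 'I_p} -> R) :
  (1 <= k)%N -> (k <= p)%N ->
  is_topk y k I ->
  0 <= gamma0 ->
  sqnorm (fun m => y m - restrict I y m) <= gamma0 * sqnorm y ->
  (d <= k)%N ->
  (* w is a probability distribution on subsets of 'I_p ... *)
  (forall S, 0 <= w S) ->
  \sum_(S : {set 'I_p}) w S = 1 ->
  (* ... supported on k-element sets at Hamming distance 2d from I ... *)
  (forall S, w S != 0 -> #|S| = k /\ hamming I S = (2 * d)%N) ->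
  (* ... whose intersection with I is a uniformly random (k-d)-subset of I *)
  (forall T : {set 'I_p}, T \subset I -> #|T| = (k - d)%N ->
     \sum_(S : {set 'I_p} | S :&: I == T) w S = ('C(k, k - d))%:R^-1) ->
  \sum_(S : {set 'I_p}) w S * sqnorm (fun m => y m - restrict S y m)
    <= (d%:R / k%:R + (1 - d%:R / k%:R) * gamma0) * sqnorm y.
Proof.
move=> k_gt0 _ [cardI _] _ tail_le le_dk w_ge0 w_sum1 w_supp w_unif.
set N := sqnorm y; set A := \sum_(i in I) y i ^+ 2.
have w_card S : w S != 0 -> #|S :&: I| = (k - d)%N.
  case/w_supp => cardS; rewrite hammingE cardI cardS setIC.
  by have := subset_leq_card (subsetIl S I); rewrite cardS; lia.
have := expect_sum_setI_uniform (fun i => y i ^+ 2) _ _ w_card.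
rewrite cardI => /(_ k_gt0 (leq_subr d k) w_unif); rewrite natrB //.
rewrite mulrBl divff ?pnatr_eq0 -?lt0n // => kept.
have residual_le :
    \sum_(S : {set 'I_p}) w S * sqnorm (fun m => y m - restrict S y m)
      <= N - (1 - d%:R / k%:R) * A.
  rewrite -kept -[N]mul1r -w_sum1 mulr_suml -sumrB; apply: ler_sum => S _.
  rewrite -mulrBr ler_wpM2l // sqnorm_sub_restrict lerB // [leRHS](big_setID I).
  by rewrite lerDl sumr_ge0 // => i _; apply: sqr_ge0.
rewrite sqnorm_sub_restrict -/N -/A in tail_le.
have ratio_le1 : d%:R / k%:R <= 1 :> R.
  by rewrite ler_pdivrMr ?mul1r ?ler_nat ?ltr0n.
have := ler_wpM2l (_ : 0 <= 1 - d%:R / k%:R) tail_le.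
rewrite subr_ge0 => /(_ ratio_le1).
move: residual_le; lra.
Qed.
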